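(* Let $C_i=\{c_i^1,\ldots,c_i^{j_i}\}$, $1\le i\le k$, be pairwise disjoint sets of variables, and for $1\le u\le n$ let $F_u=\{f_u^1,\ldots,f_u^{n+1}\}\subseteq\mathbb{C}[\bigcup_{i=1}^kC_i]$ be sets of polynomials such that: (i) for each fixed $u$, the polynomials $f_u^1,\ldots,f_u^{n+1}$ are (nonzero) multihomogeneous polynomials in some sets of variables $C_{u^1},\ldots,C_{u^{s_u}}$, all with the same multidegree; (ii) if $u\neq v$ then $F_u$ and $F_v$ involve different (disjoint) collections of the sets $C_i$; (iii) for each $u$, if $l\neq m$ then no monomial of $f_u^l$ is a monomial of $f_u^m$. Let $A=(f_u^l)_{1\le u\le n,\,1\le l\le n+1}$ be the $n\times(n+1)$ matrix, let $O$ be any $n\times(n+1)$ matrix over $\mathbb{T}$, and let $\mathrm{Cram}_O(A)=(S_1,\ldots,S_{n+1})$. Then: 1. $S_1,\ldots,S_{n+1}$ are nonzero multihomogeneous polynomials in the sets of variables $C_1,\ldots,C_k$, all with the same multidegree; 2. for each $l$, if $\sigma\ne\tau$ are two different bijections $\{1,\dots,n\}\to\{1,\dots,n+1\}\setminus\{l\}$ which appear in the expansion of $S_l$, then every monomial of $\prod_{u=1}^n f_u^{\sigma(u)}$ is different from every monomial of $\prod_{u=1}^n f_u^{\tau(u)}$; 3. if $l\ne m$, then $S_l$ and $S_m$ have no common monomial.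
   Context: $\mathbb{T}=(\mathbb{R},\max,+)$. For an $n\times n$ tropical matrix $O$, $|O|_t=\max_{\sigma\in\Sigma_n}\sum_i o_{i\sigma(i)}$. For an $n\times n$ matrix $A$ over a ring, the pseudo-determinant is $\Delta_O(A)=\sum(-1)^{i(\sigma)}a_{1\sigma(1)}\cdots a_{n\sigma(n)}$, summed over those $\sigma\in\Sigma_n$ with $\sum_i o_{i\sigma(i)}=|O|_t$ (these are the permutations ''appearing in the expansion''), $(-1)^{i(\sigma)}$ being the sign. For $n\times(n+1)$ matrices, $O^{i}$, $A^{i}$ denote the matrices with the $i$-th column deleted, and $\mathrm{Cram}_O(A)=(S_1,\ldots,S_{n+1})$ with $S_i=\Delta_{O^{i}}(A^{i})$. *)

(* coefficients C = R[i] (complex R), tropical semiring over R, R : realType. *)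
From HB Require Import structures.
From mathcomp Require Import all_boot all_order all_algebra all_fingroup.
From mathcomp Require Import reals.
From mathcomp Require Import complex.
From mathcomp Require Import mpoly.
Set Implicit Arguments.
Unset Strict Implicit.
Unset Printing Implicit Defensive.
Import Order.TTheory GRing.Theory Num.Theory.
Local Open Scope ring_scope.

Definition tweight (R : realType) (n : nat) (O : 'M[R]_n) (s : 'S_n) : R :=
  \sum_i O i (s i).

Definition tdet (R : realType) (n : nat) (O : 'M[R]_n) : R :=
  \big[Num.max/tweight O 1%g]_(s : 'S_n) tweight O s.

(* s "appears in the expansion": its tropical weight attains |O|_t *)
Definition appears (R : realType) (n : nat) (O : 'M[R]_n) (s : 'S_n) : bool :=
  tweight O s == tdet O.

Definition pdet (R : realType) (T : comRingType) (n : nat)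
    (O : 'M[R]_n) (A : 'M[T]_n) : T :=
  \sum_(s : 'S_n | appears O s) (-1) ^+ s * \prod_i A i (s i).

Definition Cram (R : realType) (T : comRingType) (n : nat)
    (O : 'M[R]_(n, n.+1)) (A : 'M[T]_(n, n.+1)) (l : 'I_n.+1) : T :=
  pdet (col' l O) (col' l A).

(* Variables 'I_N are partitioned into blocks C_0,...,C_(k-1) by blk. *)
Definition blockdeg (N k : nat) (blk : 'I_N -> 'I_k) (m : 'X_{1..N}) (i : 'I_k) : nat :=
  (\sum_(v : 'I_N | blk v == i) m v)%N.

Definition multihomog (K : ringType) (N k : nat) (blk : 'I_N -> 'I_k)
    (d : 'I_k -> nat) (p : {mpoly K[N]}) : Prop :=
  forall m, m \in msupp p -> forall i, blockdeg blk m i = d i.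

From HB Require Import structures.
From mathcomp Require Import all_boot all_order all_algebra all_fingroup.
From mathcomp Require Import reals.
From mathcomp Require Import complex.
From mathcomp Require Import mpoly.
Set Implicit Arguments.
Unset Strict Implicit.
Unset Printing Implicit Defensive.
Import Order.TTheory GRing.Theory Num.Theory.
Local Open Scope ring_scope.

(* Since the rows of A live in disjoint blocks of variables, a monomial of
   a product [\prod_u A u (c u)] splits uniquely into its row factors: the
   factor of row u is its restriction to the variables of the blocks of row
   u.  As distinct entries of a row share no monomial, the monomial then
   determines the column choice c.  Hence the terms of a pseudo-determinant
   indexed by distinct permutations have disjoint supports, so nothing
   cancels: S_l is nonzero (some term appears, since a tropical determinant
   is attained) and S_l, S_m share no monomial because their terms use
   different sets of columns. *)

Section MonomialsOfProducts.

Variables (K : nzRingType) (N : nat).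

Lemma msupp_prod_seq (I : eqType) (p : I -> {mpoly K[N]}) (r : seq I) x :
  uniq r -> x \in msupp (\prod_(u <- r) p u) ->
  exists f : I -> 'X_{1..N}, (forall u, u \in r -> f u \in msupp (p u)) /\
    x = (\big[+%MM/0%MM]_(u <- r) f u).
Proof.
elim: r x => [|a r IHr] x /=.
  move=> _; rewrite big_nil -[1]/(1%:MP) msupp1 inE => /eqP ->.
  by exists (fun _ => 0%MM); rewrite big_nil.
move=> /andP[a_notin_r uniq_r].
rewrite big_cons => /msuppM_le /allpairsP [[y z] [/= y_in z_in ->]].
have [g [g_supp ->]] := IHr z uniq_r z_in.
exists (fun u => if u == a then y else g u); split.
  by move=> u; rewrite inE; case: eqP => [-> | _ /=]; last exact: g_supp.
rewrite big_cons eqxx; congr (_ + _)%MM; apply: eq_big_seq => u u_in_r.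
by case: eqP => // u_eq_a; rewrite -u_eq_a u_in_r in a_notin_r.
Qed.

Lemma msupp_prod (I : finType) (p : I -> {mpoly K[N]}) x :
  x \in msupp (\prod_u p u) ->
  exists f : I -> 'X_{1..N}, (forall u, f u \in msupp (p u)) /\
    x = (\big[+%MM/0%MM]_u f u).
Proof.
move=> /(msupp_prod_seq (index_enum_uniq I)) [f [f_supp ->]].
by exists f; split => // u; apply: f_supp; rewrite mem_index_enum.
Qed.

Lemma mcoeff_sign (b : bool) (p : {mpoly K[N]}) m :
  ((-1) ^+ b * p)@_m = (-1) ^+ b * p@_m.
Proof. by rewrite !mulr_sign; case: b; rewrite ?mcoeffN. Qed.

Lemma msupp_sign (b : bool) (p : {mpoly K[N]}) m :
  (m \in msupp ((-1) ^+ b * p)) = (m \in msupp p).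
Proof. by rewrite !mcoeff_msupp mcoeff_sign !mulr_sign; case: b; rewrite ?oppr_eq0. Qed.

Variables (k : nat) (blk : 'I_N -> 'I_k).

Lemma multihomog_deg0 (d : 'I_k -> nat) (p : {mpoly K[N]}) m v :
  multihomog blk d p -> m \in msupp p -> d (blk v) = 0%N -> m v = 0%N.
Proof.
move=> p_hom m_in dv0; have := p_hom m m_in (blk v).
rewrite dv0 /blockdeg (bigD1 v) //= => /eqP.
by rewrite addn_eq0 => /andP[/eqP].
Qed.

Lemma multihomog_prod (I : finType) (p : I -> {mpoly K[N]})
    (d : I -> 'I_k -> nat) :
  (forall u, multihomog blk (d u) (p u)) ->
  multihomog blk (fun i => \sum_u d u i)%N (\prod_u p u).
Proof.
move=> p_hom m /msupp_prod [f [f_supp ->]] i.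
rewrite /blockdeg (eq_bigr (fun v => \sum_u f u v)%N) => [|v _]; last first.
  exact: mnm_sumE.
by rewrite exchange_big; apply: eq_bigr => u _; apply: p_hom.
Qed.

End MonomialsOfProducts.

Lemma appears_exists (R : realType) (n : nat) (O : 'M[R]_n) :
  exists s, appears O s.
Proof.
suff [s tdetE] : exists s, tdet O = tweight O s by exists s; rewrite /appears tdetE.
rewrite /tdet; apply: (big_ind (fun w => exists s, w = tweight O s)).
- by exists 1%g.
- by move=> _ _ [s ->] [t ->]; rewrite maxEle; case: ifP; [exists t | exists s].
- by move=> s _; exists s.
Qed.

Section PseudoDeterminant.

Variables (R : realType) (K : comNzRingType) (N n : nat).
Variables (O : 'M[R]_n) (A : 'M[{mpoly K[N]}]_n).

Lemma mcoeff_pdet x :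
  (pdet O A)@_x = \sum_(s | appears O s) (-1) ^+ s * (\prod_i A i (s i))@_x.
Proof. by rewrite /pdet raddf_sum; apply: eq_bigr => s _; rewrite /= mcoeff_sign. Qed.

Lemma msupp_pdet x : x \in msupp (pdet O A) ->
  exists2 s, appears O s & x \in msupp (\prod_i A i (s i)).
Proof.
move=> /msupp_sum_le /flattenP [ms /mapP [s]].
by rewrite mem_filter => /andP[s_app _] -> /[!msupp_sign] x_in; exists s.
Qed.

End PseudoDeterminant.

Section SeparatedRows.

Variables (K : idomainType) (N k n : nat) (blk : 'I_N -> 'I_k).
Variables (A : 'M[{mpoly K[N]}]_(n, n.+1)) (d : 'I_n -> 'I_k -> nat).
Hypothesis A_neq0 : forall u l, A u l != 0.
Hypothesis A_hom : forall u l, multihomog blk (d u) (A u l).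
Hypothesis rows_disjoint :
  forall u v, u != v -> forall i, (d u i = 0)%N \/ (d v i = 0)%N.
Hypothesis row_msupp_disjoint : forall u (l m : 'I_n.+1), l != m ->
  forall x, x \in msupp (A u l) -> x \notin msupp (A u m).

Lemma row_factorE (c : 'I_n -> 'I_n.+1) (f : 'I_n -> 'X_{1..N}) u v :
  (forall u, f u \in msupp (A u (c u))) ->
  f u v = if d u (blk v) == 0%N then 0%N else (\big[+%MM/0%MM]_u f u) v.
Proof.
move=> f_supp; case: eqP => [duv0 | duv_neq0].
  exact: multihomog_deg0 (@A_hom u (c u)) (f_supp u) duv0.
rewrite mnm_sumE (bigD1 u) //= big1 ?addn0 // => w w_neq_u.
apply: (multihomog_deg0 (@A_hom w (c w)) (f_supp w)).
by case: (rows_disjoint w_neq_u (blk v)).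
Qed.

Lemma msupp_prod_rows_inj (c c' : 'I_n -> 'I_n.+1) x :
  x \in msupp (\prod_u A u (c u)) -> x \in msupp (\prod_u A u (c' u)) ->
  c =1 c'.
Proof.
move=> /msupp_prod [f [f_supp xE]] /msupp_prod [g [g_supp xE']].
have fg u : f u = g u.
  by apply/mnmP => v; rewrite (row_factorE _ _ f_supp) (row_factorE _ _ g_supp) -xE -xE'.
move=> u; apply/eqP; apply: contraT => c_neq.
by have := row_msupp_disjoint c_neq (f_supp u); rewrite fg g_supp.
Qed.

Lemma msupp_Cram_terms_disjoint (l : 'I_n.+1) (s t : 'S_n) x : s != t ->
  x \in msupp (\prod_u A u (lift l (s u))) ->
  x \notin msupp (\prod_u A u (lift l (t u))).
Proof.
move=> /eqP s_neq_t xs; apply/negP => /(msupp_prod_rows_inj xs) st.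
by apply: s_neq_t; apply/permP => u; apply: lift_inj (st u).
Qed.

Variables (R : realType) (O : 'M[R]_(n, n.+1)).

Lemma mcoeff_Cram l x : (Cram O A l)@_x =
  \sum_(s | appears (col' l O) s) (-1) ^+ s * (\prod_u A u (lift l (s u)))@_x.
Proof. by rewrite mcoeff_pdet; apply: eq_bigr => s _; under eq_bigr do rewrite mxE. Qed.

Lemma msupp_Cram l x : x \in msupp (Cram O A l) ->
  exists2 s, appears (col' l O) s & x \in msupp (\prod_u A u (lift l (s u))).
Proof.
by move=> /msupp_pdet [s s_app]; under eq_bigr do rewrite mxE; exists s.
Qed.

Lemma Cram_multihomog l : multihomog blk (fun i => \sum_u d u i)%N (Cram O A l).
Proof. by move=> x /msupp_Cram [s _]; apply: multihomog_prod. Qed.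

Lemma Cram_neq0 l : Cram O A l != 0.
Proof.
have [s0 s0_app] := appears_exists (col' l O).
pose P0 := \prod_u A u (lift l (s0 u)).
have P0_neq0 : P0 != 0 by apply/prodf_neq0 => u _; apply: A_neq0.
have coefE : (Cram O A l)@_(mlead P0) = (-1) ^+ s0 * P0@_(mlead P0).
  rewrite mcoeff_Cram (bigD1 s0) //= [X in _ + X]big1 ?addr0 // => s /andP[_ s_neq_s0].
  rewrite memN_msupp_eq0 ?mulr0 //.
  have s0_neq_s : s0 != s by rewrite eq_sym.
  exact: msupp_Cram_terms_disjoint s0_neq_s (mlead_supp P0_neq0).
apply: contraTneq (mlead_supp P0_neq0) => Cram0; rewrite mcoeff_msupp negbK.
by move: coefE; rewrite Cram0 mcoeff0 => /esym/eqP; rewrite mulf_eq0 signr_eq0.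
Qed.

Lemma msupp_Cram_disjoint (l m : 'I_n.+1) x : l != m ->
  x \in msupp (Cram O A l) -> x \notin msupp (Cram O A m).
Proof.
move=> l_neq_m /msupp_Cram [s _ xs]; apply/negP => /msupp_Cram [t _ xt].
have st := msupp_prod_rows_inj xs xt.
(* Column [m] is used by every term of [S_l] but by no term of [S_m]. *)
have [j mE | mE] := unliftP l m; last by rewrite mE eqxx in l_neq_m.
by have /eqP := st (s^-1 j)%g; rewrite permKV -mE (negbTE (neq_lift _ _)).
Qed.

End SeparatedRows.

Theorem lemma2p10 (R : realType) (N k n : nat) (blk : 'I_N -> 'I_k)
  (A : 'M[{mpoly R[i][N]}]_(n, n.+1)) (d : 'I_n -> 'I_k -> nat)
  (* (i) nonzero, multihomogeneous, same multidegree d u for fixed u;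
     the blocks involved in row u are those i with d u i <> 0 *)
  (hnz : forall u l, A u l != 0)
  (hhom : forall u l, multihomog blk (d u) (A u l))
  (* (ii) different rows involve disjoint collections of blocks *)
  (hdisj : forall u v, u != v -> forall i, (d u i = 0)%N \/ (d v i = 0)%N)
  (* (iii) no common monomials within a row *)
  (hmon : forall u (l m : 'I_n.+1), l != m ->
     forall x, x \in msupp (A u l) -> x \notin msupp (A u m))
  (O : 'M[R]_(n, n.+1)) :
  (exists D : 'I_k -> nat,
     forall l, Cram O A l != 0 /\ multihomog blk D (Cram O A l)) /\
  (forall (l : 'I_n.+1) (s t : 'S_n), s != t ->
     appears (col' l O) s -> appears (col' l O) t ->
     forall x, x \in msupp (\prod_u A u (lift l (s u))) ->
       x \notin msupp (\prod_u A u (lift l (t u)))) /\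
  (forall l m : 'I_n.+1, l != m ->
     forall x, x \in msupp (Cram O A l) -> x \notin msupp (Cram O A m)).
Proof.
split; [|split].
- exists (fun i => \sum_u d u i)%N => l; split.
    exact (Cram_neq0 (A := A) hnz hhom hdisj hmon O l).
  exact (Cram_multihomog (A := A) hhom (O := O) (l := l)).
- move=> l s t s_neq_t _ _ x.
  exact (msupp_Cram_terms_disjoint (A := A) hhom hdisj hmon (x := x) s_neq_t).
- move=> l m l_neq_m x.
  exact (msupp_Cram_disjoint (A := A) hhom hdisj hmon (O := O) (x := x) l_neq_m).
Qed.
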